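(* Let $p$ be an odd prime, $R=F_p+vF_p$ with $v^2=v$, let $\vartheta=1-2v$ or $\vartheta=-1+2v$, and let $C$ be a $\vartheta$-constacyclic code of length $n$ over $R$ with generating set in standard form $\{vg_{1-v}(x),(1-v)g_v(x)\}$. Then $\phi_\vartheta(C)=[g_{1-v}(x)g_v(x)]$, the cyclic code of length $2n$ over $F_p$ (ideal of $F_p[x]/\langle x^{2n}-1\rangle$) generated by $g_{1-v}(x)g_v(x)$.
   Context: Write $\vartheta=\lambda+v\mu$ with $\lambda,\mu\in F_p$. A $\vartheta$-constacyclic code of length $n$ over $R$ is an $R$-submodule of $R^n$ closed under $(c_0,\dots,c_{n-1})\mapsto(\vartheta c_{n-1},c_0,\dots,c_{n-2})$, identified with an ideal of $R_n=R[x]/\langle x^n-\vartheta\rangle$ via $(c_i)\mapsto\sum c_ix^i$. A set $\{vg_1(x),(1-v)g_2(x)\}$ is a generating set in standard form for $C$ if it generates $C$ as an ideal, each $g_i\in F_p[x]$ is monic or $0$, $g_1\mid x^n-(\lambda+\mu)$ if $g_1\ne0$, and $g_2\mid x^n-\lambda$ if $g_2\neq0$. The Gray map $\phi_\vartheta:R_n\to F_p[x]/\langle x^{2n}-1\rangle$ sends $f(x)=r(x)+vq(x)$ ($r,q\in F_p[x]$ of degree $<n$) to $\lambda(\lambda+\mu)q(x)+x^n[-\mu r(x)-(\lambda+\mu)q(x)]$. For a monic divisor $g$ of $x^{2n}-1$, $[g(x)]$ is the ideal of $F_p[x]/\langle x^{2n}-1\rangle$ generated by $g$. *)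

From mathcomp Require Import all_boot all_order all_algebra.
Set Implicit Arguments. Unset Strict Implicit. Unset Printing Implicit Defensive.
Import GRing.Theory.
Local Open Scope ring_scope.

(* A polynomial over R = F + vF (v^2 = v) is represented as a pair (r, q) of
   polynomials over F, standing for r(x) + v q(x). *)
Definition Rpoly (F : fieldType) := ({poly F} * {poly F})%type.

Definition addR (F : fieldType) (a b : Rpoly F) : Rpoly F := (a.1 + b.1, a.2 + b.2).

(* (r1 + v q1)(r2 + v q2) = r1 r2 + v (r1 q2 + q1 r2 + q1 q2), using v^2 = v *)
Definition mulR (F : fieldType) (a b : Rpoly F) : Rpoly F :=
  (a.1 * b.1, a.1 * b.2 + a.2 * b.1 + a.2 * b.2).

Definition vtimes (F : fieldType) (g : {poly F}) : Rpoly F := (0, g).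
Definition omvtimes (F : fieldType) (g : {poly F}) : Rpoly F := (g, - g).

(* x^n - theta, with theta = lam + v mu *)
Definition xn_theta (F : fieldType) (n : nat) (lam mu : F) : Rpoly F :=
  ('X^n - lam%:P, - mu%:P).

(* Membership in the ideal <v g1, (1-v) g2> of R_n = R[x]/<x^n - theta>,
   an element of R_n being represented by its unique representative
   r + v q with deg r, deg q < n. *)
Definition in_Rn_ideal (F : fieldType) (n : nat) (lam mu : F)
    (g1 g2 : {poly F}) (c : Rpoly F) : Prop :=
  (size c.1 <= n)%N /\ (size c.2 <= n)%N /\
  exists a b h : Rpoly F,
    c = addR (addR (mulR a (vtimes g1)) (mulR b (omvtimes g2)))
             (mulR h (xn_theta n lam mu)).

Definition gray (F : fieldType) (n : nat) (lam mu : F) (c : Rpoly F) : {poly F} :=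
  (lam * (lam + mu)) *: c.2 + 'X^n * ((- mu) *: c.1 - (lam + mu) *: c.2).

(* Membership in the ideal [g] of F[x]/<x^m - 1>, elements represented by
   their representative of degree < m. *)
Definition in_cyc_ideal (F : fieldType) (m : nat) (g f : {poly F}) : Prop :=
  (size f <= m)%N /\ exists a h : {poly F}, f = a * g + h * ('X^m - 1).

From mathcomp Require Import all_boot all_order all_algebra.
From mathcomp Require Import ring.
Set Implicit Arguments. Unset Strict Implicit. Unset Printing Implicit Defensive.
Import GRing.Theory.
Local Open Scope ring_scope.

(* Write e := lam + mu = -lam, so that lam * e = -1 and x^(2n) - 1 = (x^n - lam)(x^n - e).
   Evaluating v at 0 and at 1 identifies R_n with F[x]/(x^n - lam) x F[x]/(x^n - e),
   r + v q |-> (r, r + q), and C with <g_v> x <g_{1-v}>.  In these coordinates the Gray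
   map is -e (r + q)(x^n - lam) - e r (x^n - e), i.e. up to a unit the CRT isomorphism
   onto F[x]/(x^(2n) - 1); it is a bijection on representatives of degree < n and < 2n
   because 2 is invertible, and it maps C onto the multiples of g_{1-v} g_v. *)

Lemma in_cyc_idealP (F : fieldType) (m : nat) (g f : {poly F}) :
  g %| 'X^m - 1 -> in_cyc_ideal m g f <-> (size f <= m)%N /\ g %| f.
Proof.
move=> g_dvd; split=> [[sz_f [a [h f_eq]]] | [sz_f g_f]]; split=> //.
  by rewrite f_eq; apply: dvdp_add; apply: dvdp_mull.
by exists (f %/ g), 0; rewrite mul0r addr0 divpK.
Qed.

Lemma in_Rn_idealP (F : fieldType) (n : nat) (lam mu : F) (g1 g2 r q : {poly F}) :
    g1 %| 'X^n - (lam + mu)%:P -> g2 %| 'X^n - lam%:P ->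
  in_Rn_ideal n lam mu g1 g2 (r, q) <->
  [/\ (size r <= n)%N, (size q <= n)%N, g2 %| r & g1 %| r + q].
Proof.
move=> g1_dvd g2_dvd; split=> [[/= sz_r [sz_q [a [b [h]]]]] | [sz_r sz_q g2_r g1_rq]].
  rewrite /addR /mulR /= => -[Er Eq]; split=> //.
    by rewrite Er mulr0 add0r; apply: dvdp_add; apply: dvdp_mull.
  have -> : r + q = (a.1 + a.2) * g1 + (h.1 + h.2) * ('X^n - (lam + mu)%:P).
    by rewrite Er Eq; ring.
  by apply: dvdp_add; apply: dvdp_mull.
split=> //; split=> //.
exists (0, (r + q) %/ g1), (r %/ g2, 0), 0.
by rewrite /addR /mulR /= !mulrN !divpK //; congr pair; ring.
Qed.

Section GrayMap.

Variables (F : fieldType) (n : nat) (lam mu : F).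
Hypotheses (lam_sq : lam * lam = 1) (sum_theta : lam + mu = - lam).

Let lamP_sq : lam%:P * lam%:P = 1 :> {poly F}.
Proof. by rewrite -polyCM lam_sq. Qed.

Let mu_eq : mu = - lam - lam.
Proof. by rewrite -(addKr lam mu) sum_theta. Qed.

Lemma sum_theta_neq0 : lam + mu != 0.
Proof.
by rewrite sum_theta oppr_eq0; apply: contra_eq_neq lam_sq => ->; rewrite mul0r eq_sym oner_eq0.
Qed.

Lemma Xn2_sub1_factor :
  'X^(2 * n) - 1 = ('X^n - lam%:P) * ('X^n - (lam + mu)%:P) :> {poly F}.
Proof. by rewrite mul2n -addnn exprD mu_eq; ring: lamP_sq. Qed.

Lemma gray_crt (r q : {poly F}) :
  gray n lam mu (r, q) =
    (- (lam + mu)) *: ((r + q) * ('X^n - lam%:P) + r * ('X^n - (lam + mu)%:P)).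
Proof. by rewrite /gray /= -!mul_polyC mu_eq; ring: lamP_sq. Qed.

(* Inverting the CRT: modulo x^n - e, resp. x^n - lam, the Gray image determines
   r + q, resp. r, up to the unit -2e, resp. 2e. *)
Lemma gray_crt_sum (r q : {poly F}) :
  ((-2) * (lam + mu)) *: (r + q) =
    (r + q + r) * ('X^n - (lam + mu)%:P) + (lam + mu) *: gray n lam mu (r, q).
Proof. by rewrite /gray /= -!mul_polyC mu_eq; ring: lamP_sq. Qed.

Lemma gray_crt_fst (r q : {poly F}) :
  (2 * (lam + mu)) *: r =
    (r + (r + q)) * ('X^n - lam%:P) + (lam + mu) *: gray n lam mu (r, q).
Proof. by rewrite /gray /= -!mul_polyC mu_eq; ring: lamP_sq. Qed.

Lemma size_gray (r q : {poly F}) :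
  (size r <= n)%N -> (size q <= n)%N -> (size (gray n lam mu (r, q)) <= 2 * n)%N.
Proof.
move=> sz_r sz_q; rewrite /gray /= mul2n -addnn.
rewrite (leq_trans (size_polyD _ _)) // geq_max; apply/andP; split.
  by rewrite (leq_trans (size_scale_leq _ _)) // (leq_trans sz_q) ?leq_addl.
rewrite (leq_trans (size_polyMleq _ _)) // size_polyXn addSn leq_add2l.
rewrite (leq_trans (size_polyD _ _)) // geq_max size_polyN.
by rewrite !(leq_trans (size_scale_leq _ _)).
Qed.

Hypothesis two_neq0 : 2 != 0 :> F.

Lemma gray_split (lo hi : {poly F}) :
  gray n lam mu (2^-1 *: (lo - (lam + mu) *: hi), - lo) = lo + 'X^n * hi.
Proof.
have half : (2^-1)%:P * 2 = 1 :> {poly F}.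
  by rewrite -(rmorph_nat (@polyC F) 2) -polyCM mulVf.
by rewrite /gray /= -!mul_polyC mu_eq; ring: lamP_sq half.
Qed.

Lemma gray_onto (f : {poly F}) : (size f <= 2 * n)%N ->
  exists r q : {poly F}, [/\ (size r <= n)%N, (size q <= n)%N & gray n lam mu (r, q) = f].
Proof.
move=> sz_f; have Xn_neq0 : 'X^n != 0 :> {poly F} by rewrite monic_neq0 ?monicXn.
have sz_lo : (size (f %% 'X^n)%R <= n)%N.
  by rewrite -ltnS -[n.+1](size_polyXn F) ltn_modp.
have sz_hi : (size (f %/ 'X^n)%R <= n)%N.
  by rewrite size_divp // size_polyXn leq_subLR addnn -mul2n.
exists (2^-1 *: (f %% 'X^n - (lam + mu) *: (f %/ 'X^n))), (- (f %% 'X^n)); split.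
- rewrite (leq_trans (size_scale_leq _ _)) // (leq_trans (size_polyD _ _)) //.
  by rewrite geq_max sz_lo size_polyN (leq_trans (size_scale_leq _ _)).
- by rewrite size_polyN.
- by rewrite gray_split [RHS](divp_eq f 'X^n) addrC mulrC.
Qed.

Lemma dvdp_gray (g1 g2 r q : {poly F}) :
    g1 %| 'X^n - (lam + mu)%:P -> g2 %| 'X^n - lam%:P ->
  (g1 * g2 %| gray n lam mu (r, q)) = (g2 %| r) && (g1 %| r + q).
Proof.
move=> g1_dvd g2_dvd; apply/idP/andP => [g12_gray | [g2_r g1_rq]].
  have g1_gray := dvdp_trans (dvdp_mulIl g1 g2) g12_gray.
  have g2_gray := dvdp_trans (dvdp_mulIr g1 g2) g12_gray.
  have e_neq0 := sum_theta_neq0.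
  have m2_neq0 : -2 != 0 :> F by rewrite oppr_eq0.
  split.
    rewrite -(dvdpZr _ _ (mulf_neq0 two_neq0 e_neq0)) (gray_crt_fst r q).
    by apply: dvdp_add; [apply: dvdp_mull | rewrite dvdpZr].
  rewrite -(dvdpZr _ _ (mulf_neq0 m2_neq0 e_neq0)) (gray_crt_sum r q).
  by apply: dvdp_add; [apply: dvdp_mull | rewrite dvdpZr].
rewrite gray_crt -mul_polyC dvdp_mull //; apply: dvdp_add; first exact: dvdp_mul.
by rewrite mulrC dvdp_mul.
Qed.

End GrayMap.

Lemma Fp_two_neq0 (p : nat) : prime p -> odd p -> 2 != 0 :> 'F_p.
Proof.
move=> pr_p odd_p; rewrite -(dvdn_pcharf (pchar_Fp pr_p)).
by apply: contraL odd_p; rewrite (dvdn_prime2 pr_p) // => /eqP ->.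
Qed.

Theorem corollary3p11 (p : nat) (pr_p : prime p) (odd_p : odd p)
    (n : nat) (n_gt0 : (0 < n)%N) (lam mu : 'F_p)
    (htheta : (lam = 1 /\ mu = -2) \/ (lam = -1 /\ mu = 2))
    (g1 g2 : {poly 'F_p})
    (g1_monic : g1 \is monic) (g1_dvd : g1 %| 'X^n - (lam + mu)%:P)
    (g2_monic : g2 \is monic) (g2_dvd : g2 %| 'X^n - lam%:P) :
  forall f : {poly 'F_p},
    in_cyc_ideal (2 * n) (g1 * g2) f <->
    exists c : Rpoly 'F_p, in_Rn_ideal n lam mu g1 g2 c /\ gray n lam mu c = f.
Proof.
have [lam_sq sum_theta] : lam * lam = 1 /\ lam + mu = - lam.
  by case: htheta => -[-> ->]; split; ring.
have two_neq0 := Fp_two_neq0 pr_p odd_p.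
have g12_dvd : g1 * g2 %| 'X^(2 * n) - 1.
  by rewrite (Xn2_sub1_factor n lam_sq sum_theta) mulrC dvdp_mul.
move=> f; rewrite in_cyc_idealP //; split=> [[sz_f g12_f] | [[r q] [C_rq <-]]].
  have [r [q [sz_r sz_q gray_rq]]] := gray_onto lam_sq sum_theta two_neq0 sz_f.
  exists (r, q); split=> //; apply/in_Rn_idealP => //.
  by move: g12_f; rewrite -gray_rq dvdp_gray // => /andP[].
have [sz_r sz_q g2_r g1_rq] := (in_Rn_idealP r q g1_dvd g2_dvd).1 C_rq.
by rewrite size_gray // dvdp_gray // g2_r g1_rq.
Qed.
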